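(* Let $h>0$, $\rho>0$, and $\lambda_1=\delta_1e^{\mathrm{i}\theta_1/2}$ with $\delta_1>0$, $\theta_1\in(0,\pi)$, and $\mu_\pm(\lambda_1)\neq0$, where $$\mu_+(\lambda)=\Big(\frac{2\mathrm{i}}{h\lambda}-\lambda\Big)\frac{1+\frac{\mathrm{i}h\rho^2}{2}}{1-\frac{\mathrm{i}h\rho^2}{2}},\qquad \mu_-(\lambda)=\frac{2\mathrm{i}}{h\lambda}+\lambda .$$ Let $e^{\mathrm{i}\Xi_{1,n}(t)}:=\left(\frac{\mu_+(\lambda_1)/\mu_-(\lambda_1)}{|\mu_+(\lambda_1)/\mu_-(\lambda_1)|}\right)^{n}\exp\!\Big(\mathrm{i}t\,\mathrm{Im}\Big[\frac{\mathrm{i}}{2}\Big(\frac{1}{\rho^2}-\rho^2\Big)-\frac{\mathrm{i}}{2}\Big(\lambda_1^2-\frac{1}{\lambda_1^2}\Big)\Big]\Big)$. Then $e^{\mathrm{i}\Xi_{1,n}(t)}=1$ for all $n\in\mathbb{Z}$, $t\in\mathbb{R}$ (equivalently: $\mu_+(\lambda_1)/\mu_-(\lambda_1)$ is a positive real number and $\rho^{-2}-\rho^2=(\delta_1^2-\delta_1^{-2})\cos\theta_1$) if and only if one of the following holds: (a) either ($\rho<1$ and $h>2/\rho^4$) or ($\rho>1$ and $0<h<2/\rho^4$), and $$\delta_1=\frac{1}{\rho}\sqrt{\frac{2}{h}},\qquad \cos\theta_1=\frac{2h(1-\rho^4)}{4-h^2\rho^4};$$ (b) $\rho=1$, $h=2$,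 $\delta_1=1$, and $\theta_1\in(\pi/2,\pi)$ (i.e. $\arg\lambda_1\in(\pi/4,\pi/2)$).
   Context: This condition characterizes when the one-breather solution on the nonzero constant background $(U,R,Q)=(\rho,\rho,\rho^{-1})$ of the semi-discrete MTM system has no periodic oscillations; $\mu_\pm$ are the multipliers of the two fundamental solutions $(\rho,-\lambda)^T\mu_+^n e^{\frac{\mathrm{i}}{2}(\rho^{-2}-\rho^2)t}$ and $(\lambda,\rho)^T\mu_-^n e^{\frac{\mathrm{i}}{2}(\lambda^2-\lambda^{-2})t}$ of the Lax pair at that background, and $\Xi_{1,n}$ is the imaginary part of the phase difference between them. *)

From Stdlib Require Import Reals Lra ZArith.
Open Scope R_scope.

Record C := mkC { Re : R ; Im : R }.

Definition RtoC (x : R) : C := mkC x 0.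
Definition Czero : C := RtoC 0.
Definition Cone : C := RtoC 1.
Definition Ci : C := mkC 0 1.
Definition Cadd (z w : C) : C := mkC (Re z + Re w) (Im z + Im w).
Definition Copp (z : C) : C := mkC (- Re z) (- Im z).
Definition Csub (z w : C) : C := Cadd z (Copp w).
Definition Cmul (z w : C) : C :=
  mkC (Re z * Re w - Im z * Im w) (Re z * Im w + Im z * Re w).
Definition Cinv (z : C) : C :=
  mkC (Re z / (Re z ^ 2 + Im z ^ 2)) (- Im z / (Re z ^ 2 + Im z ^ 2)).
Definition Cdiv (z w : C) : C := Cmul z (Cinv w).
Definition Cnorm (z : C) : R := sqrt (Re z ^ 2 + Im z ^ 2).
Definition Cexpi (s : R) : C := mkC (cos s) (sin s).
Definition Cpolar (r a : R) : C := mkC (r * cos a) (r * sin a).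

Fixpoint Cpow (z : C) (n : nat) : C :=
  match n with O => Cone | S m => Cmul z (Cpow z m) end.
Definition CpowZ (z : C) (n : Z) : C :=
  match n with
  | Z0 => Cone
  | Zpos p => Cpow z (Pos.to_nat p)
  | Zneg p => Cinv (Cpow z (Pos.to_nat p))
  end.

Definition mu_plus (h rho : R) (lam : C) : C :=
  Cmul (Csub (Cdiv (mkC 0 2) (Cmul (RtoC h) lam)) lam)
       (Cdiv (mkC 1 (h * rho ^ 2 / 2)) (mkC 1 (- (h * rho ^ 2 / 2)))).

Definition mu_minus (h : R) (lam : C) : C :=
  Cadd (Cdiv (mkC 0 2) (Cmul (RtoC h) lam)) lam.

Definition expiXi (h rho : R) (lam : C) (n : Z) (t : R) : C :=
  let q := Cdiv (mu_plus h rho lam) (mu_minus h lam) in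
  let phase :=
    Im (Csub (Cmul (mkC 0 (1/2)) (RtoC (1 / rho ^ 2 - rho ^ 2)))
             (Cmul (mkC 0 (1/2)) (Csub (Cmul lam lam) (Cinv (Cmul lam lam))))) in
  Cmul (CpowZ (Cdiv q (RtoC (Cnorm q))) n) (Cexpi (t * phase)).

From Pilot Require Import Defs.
From Stdlib Require Import Reals ZArith Lra Psatz.
Open Scope R_scope.

(* Write lambda_1 = delta_1 e^{i theta_1/2} = p + i s.  Since 0 < theta_1 < pi,
   p and s are positive, and we set u = p^2 + s^2 = delta_1^2 and
   x = p^2 - s^2 = delta_1^2 cos theta_1, so that -u < x.

   1. The family (q/|q|)^n e^{i t f} is identically 1 iff q is a positive real
      number and f = 0 (phase_family_trivial).
   2. For q = mu_+/mu_- and the phase f of the theorem, a direct computation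
      gives Im q, Re q and f as explicit rational functions of p and s whose
      denominators are positive; hence the three conditions become polynomial
      conditions on (h, rho, u, x) (mu_ratio_conditions).
   3. This polynomial system is solved in admissible_parameters: eliminating x
      produces the product (rho^4 - u^2) (h^2 rho^4 u^2 - 4), the factor
      rho^4 = u^2 is excluded by -u < x unless 4 = h^2 rho^4, which gives the
      exceptional case rho = 1, h = 2; otherwise h rho^2 u = 2, x is explicit,
      and the sign of Re q together with -u < x selects the two regimes.
   4. Translating (u, x) back to (delta_1, theta_1) gives the theorem. *)

Lemma Cmul_1_r (w : Defs.C) : Cmul w Cone = w.
Proof. destruct w; unfold Cmul, Cone, RtoC; simpl; f_equal; ring. Qed.

Lemma Cmul_1_l (w : Defs.C) : Cmul Cone w = w.
Proof. destruct w; unfold Cmul, Cone, RtoC; simpl; f_equal; ring. Qed.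

Lemma CpowZ_1 (n : Z) : CpowZ Cone n = Cone.
Proof.
assert (Hpow : forall m, Cpow Cone m = Cone)
  by (induction m as [|m IH]; simpl; [reflexivity | rewrite IH; apply Cmul_1_r]).
destruct n; simpl; rewrite ?Hpow; try reflexivity.
unfold Cinv, Cone, RtoC; simpl; f_equal; field.
Qed.

Lemma Cdiv_real (q : Defs.C) (r : R) :
  r <> 0 -> Cdiv q (RtoC r) = mkC (Re q / r) (Im q / r).
Proof. intros Hr; unfold Cdiv, Cmul, Cinv, RtoC; simpl; f_equal; field; exact Hr. Qed.

Lemma Cnormalize_eq_1 (q : Defs.C) :
  Cdiv q (RtoC (Cnorm q)) = Cone <-> Im q = 0 /\ 0 < Re q.
Proof.
destruct q as [a b]; unfold Cnorm; cbn [Re Im].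
set (r := sqrt (a ^ 2 + b ^ 2)).
assert (Hr2 : r ^ 2 = a ^ 2 + b ^ 2) by (unfold r; rewrite pow2_sqrt; nra).
destruct (Req_dec r 0) as [Z | NZ].
- assert (Ha : a = 0) by nra; assert (Hb : b = 0) by nra.
  rewrite Z, Ha, Hb; unfold Cdiv, Cmul, Cinv, RtoC, Cone; simpl.
  split; [intros E; injection E; lra | lra].
- rewrite Cdiv_real by exact NZ; unfold Cone, RtoC; simpl.
  split.
  + intros E; injection E as Ea Eb.
    assert (Ea' : a = r) by (rewrite <- (Rmult_1_l r), <- Ea; field; exact NZ).
    assert (Eb' : b = 0) by (rewrite <- (Rmult_0_l r), <- Eb; field; exact NZ).
    assert (0 <= r) by apply sqrt_pos; lra.
  + intros [-> Ha].
    assert (Er : r = a) by (assert (0 <= r) by apply sqrt_pos; apply Rsqr_inj; unfold Rsqr; nra).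
    rewrite Er; f_equal; field; lra.
Qed.

Lemma Cexpi_0 : Cexpi 0 = Cone.
Proof. unfold Cexpi, Cone, RtoC; rewrite cos_0, sin_0; reflexivity. Qed.

Lemma Cexpi_const_1 (f : R) : (forall t, Cexpi (t * f) = Cone) <-> f = 0.
Proof.
split.
- intros H; destruct (Req_dec f 0) as [Z | NZ]; [exact Z | exfalso].
  assert (E := H (PI / f)); replace (PI / f * f) with PI in E by (field; exact NZ).
  injection E as Ecos _; rewrite cos_PI in Ecos; lra.
- intros -> t; rewrite Rmult_0_r; exact Cexpi_0.
Qed.

Lemma phase_family_trivial (q : Defs.C) (f : R) :
  (forall (n : Z) (t : R), Cmul (CpowZ (Cdiv q (RtoC (Cnorm q))) n) (Cexpi (t * f)) = Cone)
  <-> Im q = 0 /\ 0 < Re q /\ f = 0.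
Proof.
transitivity (Cdiv q (RtoC (Cnorm q)) = Cone /\ forall t, Cexpi (t * f) = Cone).
- split.
  + intros H; split.
    * specialize (H 1%Z 0); rewrite Rmult_0_l, Cexpi_0 in H.
      simpl in H; rewrite !Cmul_1_r in H; exact H.
    * intros t; specialize (H 0%Z t); simpl in H; rewrite Cmul_1_l in H; exact H.
  + intros [-> Hf] n t; rewrite CpowZ_1, Hf; apply Cmul_1_l.
- rewrite Cnormalize_eq_1, Cexpi_const_1; tauto.
Qed.

Definition mu_ratio (h rho : R) (lam : Defs.C) : Defs.C :=
  Cdiv (mu_plus h rho lam) (mu_minus h lam).

Definition phase (rho : R) (lam : Defs.C) : R :=
  Im (Csub (Cmul (mkC 0 (1/2)) (RtoC (1 / rho ^ 2 - rho ^ 2)))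
           (Cmul (mkC 0 (1/2)) (Csub (Cmul lam lam) (Cinv (Cmul lam lam))))).

Definition ratio_denom (h r p s : R) : R :=
  let u := p ^ 2 + s ^ 2 in
  (4 + h ^ 2 * r ^ 4) * ((2 * s + h * p * u) ^ 2 + (2 * p + h * s * u) ^ 2).

(* Numerators of Im q and Re q, up to positive factors, written in terms of
   u = |lambda|^2 and x = Re(lambda^2). *)
Definition imag_numer (h r u x : R) : R := x * (4 - h ^ 2 * r ^ 4) + r ^ 2 * (4 - h ^ 2 * u ^ 2).

Definition real_numer (h r u x : R) : R :=
  (4 - h ^ 2 * r ^ 4) * (4 - h ^ 2 * u ^ 2) - 16 * h ^ 2 * r ^ 2 * x.

Ltac nonzero_by_positivity :=
  repeat split; apply Rgt_not_eq;
  repeat (apply Rplus_lt_0_compat || apply Rmult_lt_0_compat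
          || apply Rplus_le_lt_0_compat || apply Rplus_lt_le_0_compat);
  try nra; try lra.

Section FirstQuadrant.
Variables (h r p s : R).
Hypotheses (hh : 0 < h) (hr : 0 < r) (hp : 0 < p) (hs : 0 < s).

Lemma ratio_denom_pos : 0 < ratio_denom h r p s.
Proof.
unfold ratio_denom; cbv zeta.
assert (0 < h * p * (p ^ 2 + s ^ 2)) by (apply Rmult_lt_0_compat; nra).
apply Rmult_lt_0_compat; [nra |].
apply Rplus_lt_le_0_compat; [apply pow_lt | apply pow2_ge_0]; lra.
Qed.

Lemma Im_mu_ratio :
  Im (mu_ratio h r (mkC p s)) =
  4 * h * (p ^ 2 + s ^ 2) * imag_numer h r (p ^ 2 + s ^ 2) (p ^ 2 - s ^ 2) / ratio_denom h r p s.
Proof.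
unfold ratio_denom, imag_numer, mu_ratio, mu_plus, mu_minus,
  Cdiv, Cmul, Csub, Cadd, Cinv, Copp, RtoC; simpl.
field; nonzero_by_positivity.
Qed.

Lemma Re_mu_ratio :
  Re (mu_ratio h r (mkC p s)) =
  (p ^ 2 + s ^ 2) * real_numer h r (p ^ 2 + s ^ 2) (p ^ 2 - s ^ 2) / ratio_denom h r p s.
Proof.
unfold ratio_denom, real_numer, mu_ratio, mu_plus, mu_minus,
  Cdiv, Cmul, Csub, Cadd, Cinv, Copp, RtoC; simpl.
field; nonzero_by_positivity.
Qed.

Lemma phase_first_quadrant :
  phase r (mkC p s) =
  / 2 * (1 / r ^ 2 - r ^ 2) - / 2 * ((p ^ 2 - s ^ 2) - (p ^ 2 - s ^ 2) / (p ^ 2 + s ^ 2) ^ 2).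
Proof.
unfold phase, Cmul, Csub, Cadd, Cinv, Copp, RtoC; simpl.
assert (0 < p * s) by nra.
field; repeat split; apply Rgt_not_eq; nra.
Qed.

Lemma mu_ratio_conditions :
  (Im (mu_ratio h r (mkC p s)) = 0 /\ 0 < Re (mu_ratio h r (mkC p s)) /\ phase r (mkC p s) = 0)
  <-> (imag_numer h r (p ^ 2 + s ^ 2) (p ^ 2 - s ^ 2) = 0
       /\ 0 < real_numer h r (p ^ 2 + s ^ 2) (p ^ 2 - s ^ 2)
       /\ 1 / r ^ 2 - r ^ 2 = (p ^ 2 - s ^ 2) - (p ^ 2 - s ^ 2) / (p ^ 2 + s ^ 2) ^ 2).
Proof.
rewrite Im_mu_ratio, Re_mu_ratio, phase_first_quadrant.
set (u := p ^ 2 + s ^ 2); set (x := p ^ 2 - s ^ 2).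
assert (HD := ratio_denom_pos); assert (Hu : 0 < u) by (unfold u; nra).
set (Ni := imag_numer h r u x); set (Nr := real_numer h r u x).
assert (Hc1 : 0 < 4 * h * u / ratio_denom h r p s) by (apply Rdiv_lt_0_compat; nra).
assert (Hc2 : 0 < u / ratio_denom h r p s) by (apply Rdiv_lt_0_compat; lra).
replace (4 * h * u * Ni / ratio_denom h r p s) with (4 * h * u / ratio_denom h r p s * Ni)
  by (field; lra).
replace (u * Nr / ratio_denom h r p s) with (u / ratio_denom h r p s * Nr) by (field; lra).
split; intros [E1 [E2 E3]]; (split; [| split]); try lra.
- destruct (Rmult_integral _ _ E1); lra.
- apply (Rmult_lt_reg_l (u / ratio_denom h r p s)); lra.
- rewrite E1; ring.
- apply Rmult_lt_0_compat; lra.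
Qed.
End FirstQuadrant.

(* Eliminating x between the imaginary-part and phase equations leaves this
   product, whose two factors give the two families of solutions. *)
Lemma imag_phase_resultant (h r u : R) :
  u ^ 2 * (1 - r ^ 4) * (4 - h ^ 2 * r ^ 4) + r ^ 4 * (4 - h ^ 2 * u ^ 2) * (u ^ 2 - 1)
  = (r ^ 4 - u ^ 2) * (h ^ 2 * r ^ 4 * u ^ 2 - 4).
Proof. ring. Qed.

Lemma pos_sq_inj (a b : R) : 0 < a -> 0 < b -> a ^ 2 = b ^ 2 -> a = b.
Proof. intros; nra. Qed.

Lemma div_lt_iff (a b c : R) : 0 < c -> (a / c < b <-> a < b * c).
Proof.
intros Hc; split; intros H.
- apply (Rmult_lt_compat_r c) in H; [| exact Hc].
  replace (a / c * c) with a in H by (field; lra); exact H.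
- apply (Rmult_lt_reg_r c); [exact Hc |]; replace (a / c * c) with a by (field; lra); exact H.
Qed.

Lemma lt_div_iff (a b c : R) : 0 < c -> (b < a / c <-> b * c < a).
Proof.
intros Hc; split; intros H.
- apply (Rmult_lt_compat_r c) in H; [| exact Hc].
  replace (a / c * c) with a in H by (field; lra); exact H.
- apply (Rmult_lt_reg_r c); [exact Hc |]; replace (a / c * c) with a by (field; lra); exact H.
Qed.

Lemma regime_iff (h r : R) :
  0 < h -> 0 < r ->
  ((r < 1 /\ h > 2 / r ^ 4) \/ (r > 1 /\ 0 < h < 2 / r ^ 4))
  <-> (r < 1 /\ 2 < h * r ^ 4) \/ (1 < r /\ h * r ^ 4 < 2).
Proof.
intros hh hr; assert (Hr4 : 0 < r ^ 4) by (apply pow_lt; exact hr).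
unfold Rgt; rewrite (div_lt_iff 2 h _ Hr4), (lt_div_iff 2 h _ Hr4); tauto.
Qed.

Lemma gap_sign (h r : R) :
  0 < h -> 0 < r ->
  (r < 1 /\ 2 < h * r ^ 4) \/ (1 < r /\ h * r ^ 4 < 2) ->
  (r < 1 /\ 4 - h ^ 2 * r ^ 4 < 0) \/ (1 < r /\ 0 < 4 - h ^ 2 * r ^ 4).
Proof.
intros hh hr [[Hr Hc] | [Hr Hc]]; [left | right]; split; try exact Hr.
- assert (r ^ 2 < 1) by nra; assert (2 < h * r ^ 2) by nra; nra.
- assert (1 < r ^ 2) by nra; assert (h * r ^ 2 < 2) by nra.
  assert (0 < h * r ^ 2) by (apply Rmult_lt_0_compat; nra); nra.
Qed.

Section Algebra.
Variables (h r u x : R).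
Hypotheses (hh : 0 < h) (hr : 0 < r) (hu : 0 < u) (hxu : - u < x).

Lemma phase_condition_iff :
  1 / r ^ 2 - r ^ 2 = x - x / u ^ 2 <-> u ^ 2 * (1 - r ^ 4) = x * r ^ 2 * (u ^ 2 - 1).
Proof.
assert (Hru : 0 < r ^ 2 * u ^ 2) by (apply Rmult_lt_0_compat; apply pow_lt; lra).
split; intros E.
- apply (Rmult_eq_reg_r (/ (r ^ 2 * u ^ 2))); [| apply Rinv_neq_0_compat; lra].
  replace (u ^ 2 * (1 - r ^ 4) * / (r ^ 2 * u ^ 2)) with (1 / r ^ 2 - r ^ 2) by (field; lra).
  rewrite E; field; lra.
- apply (Rmult_eq_reg_r (r ^ 2 * u ^ 2)); [| lra].
  replace ((1 / r ^ 2 - r ^ 2) * (r ^ 2 * u ^ 2)) with (u ^ 2 * (1 - r ^ 4)) by (field; lra).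
  rewrite E; field; lra.
Qed.

Lemma degenerate_solutions :
  4 - h ^ 2 * r ^ 4 = 0 ->
  (imag_numer h r u x = 0 /\ u ^ 2 * (1 - r ^ 4) = x * r ^ 2 * (u ^ 2 - 1))
  <-> (r = 1 /\ h = 2 /\ u = 1).
Proof.
unfold imag_numer; intros E0; split.
- intros [HI HP].
  assert (Hhr : h * r ^ 2 = 2)
    by (apply pos_sq_inj; [apply Rmult_lt_0_compat; nra | lra | nra]).
  assert (Hhu : h * u = 2).
  { rewrite E0, Rmult_0_r, Rplus_0_l in HI.
    apply pos_sq_inj; [nra | lra |].
    destruct (Rmult_integral _ _ HI) as [Z | Z]; nra. }
  assert (Hur : u = r ^ 2) by nra; subst u.
  assert (Hr4 : (1 - r ^ 4) * ((r ^ 2 + x) * r ^ 2) = 0) by nra.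
  assert (Hr41 : r ^ 4 = 1).
  { destruct (Rmult_integral _ _ Hr4) as [Z | Z]; [lra |].
    assert (0 < (r ^ 2 + x) * r ^ 2) by (apply Rmult_lt_0_compat; nra); lra. }
  assert (Hr1 : r = 1) by (assert (r ^ 2 = 1) by nra; nra).
  subst r; repeat split; nra.
- intros (-> & -> & ->); split; ring.
Qed.

Lemma generic_solutions :
  4 - h ^ 2 * r ^ 4 <> 0 ->
  (imag_numer h r u x = 0 /\ u ^ 2 * (1 - r ^ 4) = x * r ^ 2 * (u ^ 2 - 1))
  <-> (h * r ^ 2 * u = 2 /\ x * (4 - h ^ 2 * r ^ 4) * r ^ 2 = 4 * (1 - r ^ 4)).
Proof.
unfold imag_numer; set (E := 4 - h ^ 2 * r ^ 4); intros E0; split.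
- intros [HI HP].
  assert (Hres : (r ^ 4 - u ^ 2) * (h ^ 2 * r ^ 4 * u ^ 2 - 4) = 0).
  { rewrite <- imag_phase_resultant; fold E; rewrite HP.
    replace (x * r ^ 2 * (u ^ 2 - 1) * E) with (x * E * r ^ 2 * (u ^ 2 - 1)) by ring.
    replace (x * E) with (- (r ^ 2 * (4 - h ^ 2 * u ^ 2))) by lra; ring. }
  destruct (Rmult_integral _ _ Hres) as [Hur | Hhu].
  + exfalso; assert (u = r ^ 2) by (apply pos_sq_inj; nra); subst u.
    assert (HE : E * (x + r ^ 2) = 0) by (unfold E in *; lra).
    destruct (Rmult_integral _ _ HE); [contradiction | lra].
  + assert (Hhru : h * r ^ 2 * u = 2)
      by (apply pos_sq_inj; [apply Rmult_lt_0_compat; [apply Rmult_lt_0_compat |]; nra | lra | nra]).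
    split; [exact Hhru | nra].
- intros [Hhru HxE]; split.
  + apply (Rmult_eq_reg_r (r ^ 2)); [| nra].
    replace ((x * E + r ^ 2 * (4 - h ^ 2 * u ^ 2)) * r ^ 2)
      with (x * E * r ^ 2 + 4 * r ^ 4 - (h * r ^ 2 * u) ^ 2) by ring.
    rewrite HxE, Hhru; ring.
  + apply (Rmult_eq_reg_r E); [| exact E0].
    replace (x * r ^ 2 * (u ^ 2 - 1) * E) with (x * E * r ^ 2 * (u ^ 2 - 1)) by ring.
    rewrite HxE; unfold E.
    replace (u ^ 2 * (1 - r ^ 4) * (4 - h ^ 2 * r ^ 4))
      with ((1 - r ^ 4) * (4 * u ^ 2 - (h * r ^ 2 * u) ^ 2)) by ring.
    rewrite Hhru; ring.
Qed.

(* On the generic branch the sign of Re q, times that of 4 - h^2 r^4, is the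
   sign of r - 1 ... *)
Lemma real_numer_on_solutions :
  h * r ^ 2 * u = 2 -> x * (4 - h ^ 2 * r ^ 4) * r ^ 2 = 4 * (1 - r ^ 4) ->
  real_numer h r u x * (4 - h ^ 2 * r ^ 4) * r ^ 4
  = 4 * (r ^ 4 - 1) * ((4 - h ^ 2 * r ^ 4) ^ 2 + 16 * h ^ 2 * r ^ 4).
Proof.
unfold real_numer; set (E := 4 - h ^ 2 * r ^ 4); intros Hhru HxE.
replace ((E * (4 - h ^ 2 * u ^ 2) - 16 * h ^ 2 * r ^ 2 * x) * E * r ^ 4)
  with (E ^ 2 * (4 * r ^ 4 - (h * r ^ 2 * u) ^ 2) - 16 * h ^ 2 * r ^ 4 * (x * E * r ^ 2)) by ring.
rewrite Hhru, HxE; ring.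
Qed.

(* ... and the constraint x > -u is controlled by the sign of h r^4 - 2. *)
Lemma lower_bound_on_solutions :
  h * r ^ 2 * u = 2 -> x * (4 - h ^ 2 * r ^ 4) * r ^ 2 = 4 * (1 - r ^ 4) ->
  (x + u) * ((4 - h ^ 2 * r ^ 4) * r ^ 2 * h) = - 2 * ((h * r ^ 4 - 2) * (h + 2)).
Proof.
intros Hhru HxE.
replace ((x + u) * ((4 - h ^ 2 * r ^ 4) * r ^ 2 * h))
  with (x * (4 - h ^ 2 * r ^ 4) * r ^ 2 * h + (4 - h ^ 2 * r ^ 4) * (h * r ^ 2 * u)) by ring.
rewrite Hhru, HxE; ring.
Qed.

Lemma solutions_sign :
  4 - h ^ 2 * r ^ 4 <> 0 ->
  h * r ^ 2 * u = 2 -> x * (4 - h ^ 2 * r ^ 4) * r ^ 2 = 4 * (1 - r ^ 4) ->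
  0 < real_numer h r u x <-> (r < 1 /\ 2 < h * r ^ 4) \/ (1 < r /\ h * r ^ 4 < 2).
Proof.
intros E0 Hhru HxE.
assert (HR := real_numer_on_solutions Hhru HxE).
assert (HL := lower_bound_on_solutions Hhru HxE).
set (E := 4 - h ^ 2 * r ^ 4) in *; set (Nr := real_numer h r u x) in *.
assert (HK : 0 < E ^ 2 + 16 * h ^ 2 * r ^ 4) by (assert (0 < h * r ^ 2) by nra; nra).
assert (Hr4 : 0 < r ^ 4) by (apply pow_lt; exact hr).
assert (Hhr : 0 < r ^ 2 * h) by (apply Rmult_lt_0_compat; nra).
replace (Nr * E * r ^ 4) with ((Nr * r ^ 4) * E) in HR by ring.
replace ((x + u) * (E * r ^ 2 * h)) with (((x + u) * (r ^ 2 * h)) * E) in HL by ring.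
assert (Hxu : 0 < (x + u) * (r ^ 2 * h)) by (apply Rmult_lt_0_compat; lra).
split.
- intros HRpos; assert (HRr : 0 < Nr * r ^ 4) by (apply Rmult_lt_0_compat; lra).
  destruct (Rtotal_order r 1) as [Hr | [-> | Hr]].
  + assert (r ^ 4 < 1) by (assert (r ^ 2 < 1) by nra; nra).
    assert (E < 0) by nra.
    left; split; [exact Hr | nra].
  + exfalso; rewrite pow1 in HR; nra.
  + assert (1 < r ^ 4) by (assert (1 < r ^ 2) by nra; nra).
    assert (0 < E) by nra.
    right; split; [exact Hr | nra].
- intros Hregime.
  destruct (gap_sign h r hh hr Hregime) as [[Hr En] | [Hr Ep]].
  + assert (r ^ 4 < 1) by (assert (r ^ 2 < 1) by nra; nra).
    assert (0 < Nr * r ^ 4) by nra; nra.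
  + assert (1 < r ^ 4) by (assert (1 < r ^ 2) by nra; nra).
    assert (0 < Nr * r ^ 4) by nra; nra.
Qed.

Lemma generic_solutions_explicit :
  4 - h ^ 2 * r ^ 4 <> 0 ->
  (h * r ^ 2 * u = 2 /\ x * (4 - h ^ 2 * r ^ 4) * r ^ 2 = 4 * (1 - r ^ 4))
  <-> (u = 2 / (h * r ^ 2) /\ x = u * (2 * h * (1 - r ^ 4) / (4 - h ^ 2 * r ^ 4))).
Proof.
intros E0; assert (Hhr : 0 < h * r ^ 2) by (apply Rmult_lt_0_compat; nra).
split; intros [Hu Hx].
- assert (Hu' : u = 2 / (h * r ^ 2)) by (rewrite <- Hu; field; lra).
  split; [exact Hu' |].
  apply (Rmult_eq_reg_r ((4 - h ^ 2 * r ^ 4) * r ^ 2));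
    [| apply Rmult_integral_contrapositive; split; nra].
  replace (x * ((4 - h ^ 2 * r ^ 4) * r ^ 2)) with (x * (4 - h ^ 2 * r ^ 4) * r ^ 2) by ring.
  rewrite Hx, Hu'; field; split; lra.
- split.
  + rewrite Hu; field; lra.
  + rewrite Hx, Hu; field; split; lra.
Qed.

Theorem admissible_parameters :
  (imag_numer h r u x = 0 /\ 0 < real_numer h r u x /\ 1 / r ^ 2 - r ^ 2 = x - x / u ^ 2)
  <->
  ( ( ((r < 1 /\ h > 2 / r ^ 4) \/ (r > 1 /\ 0 < h < 2 / r ^ 4))
      /\ u = 2 / (h * r ^ 2) /\ x = u * (2 * h * (1 - r ^ 4) / (4 - h ^ 2 * r ^ 4)) )
    \/ (r = 1 /\ h = 2 /\ u = 1 /\ x < 0) ).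
Proof.
rewrite phase_condition_iff, regime_iff by assumption.
destruct (Req_dec (4 - h ^ 2 * r ^ 4) 0) as [E0 | E0].
- assert (Hdeg := degenerate_solutions E0).
  assert (Hnoreg : ~ ((r < 1 /\ 2 < h * r ^ 4) \/ (1 < r /\ h * r ^ 4 < 2)))
    by (intros Hreg; destruct (gap_sign h r hh hr Hreg) as [[_ E] | [_ E]]; lra).
  split.
  + intros [HI [HR HP]]; destruct (proj1 Hdeg (conj HI HP)) as (-> & -> & ->).
    right; unfold real_numer in HR; repeat split; lra.
  + intros [[Hreg _] | (Hr & Hh & Hu & Hx)]; [contradiction |].
    destruct (proj2 Hdeg (conj Hr (conj Hh Hu))) as [HI HP].
    subst; unfold real_numer; repeat split; try assumption; lra.
- assert (Hgen := generic_solutions E0).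
  assert (Hexp := generic_solutions_explicit E0).
  split.
  + intros [HI [HR HP]]; destruct (proj1 Hgen (conj HI HP)) as [Hhru HxE].
    left; split; [apply (solutions_sign E0 Hhru HxE); exact HR | apply Hexp; tauto].
  + intros [[Hreg Hux] | (-> & -> & _)].
    * destruct (proj2 Hexp Hux) as [Hhru HxE].
      destruct (proj2 Hgen (conj Hhru HxE)) as [HI HP].
      repeat split; try assumption; apply (solutions_sign E0 Hhru HxE); exact Hreg.
    * exfalso; apply E0; ring.
Qed.

End Algebra.

Lemma polar_first_quadrant (delta theta : R) :
  0 < delta -> 0 < theta < PI ->
  let p := delta * cos (theta / 2) in let s := delta * sin (theta / 2) in
  0 < p /\ 0 < s /\ p ^ 2 + s ^ 2 = delta ^ 2 /\ p ^ 2 - s ^ 2 = delta ^ 2 * cos theta.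
Proof.
intros Hd Ht p s; repeat split.
- apply Rmult_lt_0_compat; [exact Hd | apply cos_gt_0; lra].
- apply Rmult_lt_0_compat; [exact Hd | apply sin_gt_0; lra].
- unfold p, s; rewrite <- (Rmult_1_r (delta ^ 2)), <- (sin2_cos2 (theta / 2)).
  unfold Rsqr; ring.
- replace (cos theta) with (cos (2 * (theta / 2))) by (f_equal; field).
  rewrite cos_2a; unfold p, s; ring.
Qed.

Lemma cos_neg_iff (theta : R) : 0 < theta < PI -> (cos theta < 0 <-> PI / 2 < theta).
Proof.
intros Ht; split; intros H.
- destruct (Rlt_or_le (PI / 2) theta) as [Hlt | Hle]; [exact Hlt |].
  assert (0 <= cos theta) by (apply cos_ge_0; lra); lra.
- apply cos_lt_0; lra.
Qed.

Lemma sq_eq_iff_sqrt (d h r : R) :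
  0 < h -> 0 < r -> 0 < d -> (d ^ 2 = 2 / (h * r ^ 2) <-> d = 1 / r * sqrt (2 / h)).
Proof.
intros hh hr hd.
assert (Hs : sqrt (2 / h) ^ 2 = 2 / h) by (apply pow2_sqrt; apply Rlt_le, Rdiv_lt_0_compat; lra).
assert (Hsq : (1 / r * sqrt (2 / h)) ^ 2 = 2 / (h * r ^ 2)) by (rewrite Rpow_mult_distr, Hs; field; lra).
split; intros H.
- apply pos_sq_inj; [exact hd | | rewrite Hsq; exact H].
  apply Rmult_lt_0_compat; [apply Rdiv_lt_0_compat; lra | apply sqrt_lt_R0, Rdiv_lt_0_compat; lra].
- rewrite H; exact Hsq.
Qed.

Lemma polar_parameters (h r d theta c : R) (A : Prop) :
  0 < h -> 0 < r -> 0 < d -> 0 < theta < PI ->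
  ((A /\ d ^ 2 = 2 / (h * r ^ 2) /\ d ^ 2 * cos theta = d ^ 2 * c)
   \/ (r = 1 /\ h = 2 /\ d ^ 2 = 1 /\ d ^ 2 * cos theta < 0))
  <-> ((A /\ d = 1 / r * sqrt (2 / h) /\ cos theta = c)
       \/ (r = 1 /\ h = 2 /\ d = 1 /\ PI / 2 < theta < PI)).
Proof.
intros hh hr hd Ht.
assert (Hd2 : 0 < d ^ 2) by (apply pow_lt; exact hd).
rewrite (sq_eq_iff_sqrt d h r hh hr hd).
assert (Hcos : d ^ 2 * cos theta = d ^ 2 * c <-> cos theta = c)
  by (split; [intros H; apply Rmult_eq_reg_l in H; lra | intros ->; reflexivity]).
assert (Hneg : d ^ 2 * cos theta < 0 <-> PI / 2 < theta < PI).
{ rewrite <- (Rmult_0_r (d ^ 2)); split.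
  - intros H; apply Rmult_lt_reg_l in H; [split; [apply cos_neg_iff |]; lra | exact Hd2].
  - intros [H _]; apply Rmult_lt_compat_l; [exact Hd2 | apply cos_neg_iff; lra]. }
assert (Hone : d ^ 2 = 1 <-> d = 1)
  by (split; [intros H; apply pos_sq_inj; lra | intros ->; ring]).
rewrite Hcos, Hneg, Hone; tauto.
Qed.

Theorem mainTheorem8 (h rho delta1 theta1 : R)
  (hh : 0 < h) (hrho : 0 < rho) (hdelta : 0 < delta1)
  (htheta : 0 < theta1 < PI)
  (hmup : mu_plus h rho (Cpolar delta1 (theta1 / 2)) <> Czero)
  (hmum : mu_minus h (Cpolar delta1 (theta1 / 2)) <> Czero) :
  (forall (n : Z) (t : R), expiXi h rho (Cpolar delta1 (theta1 / 2)) n t = Cone)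
  <->
  ( ( ((rho < 1 /\ h > 2 / rho ^ 4) \/ (rho > 1 /\ 0 < h < 2 / rho ^ 4))
      /\ delta1 = (1 / rho) * sqrt (2 / h)
      /\ cos theta1 = 2 * h * (1 - rho ^ 4) / (4 - h ^ 2 * rho ^ 4) )
    \/
    ( rho = 1 /\ h = 2 /\ delta1 = 1 /\ PI / 2 < theta1 < PI ) ).
Proof.
destruct (polar_first_quadrant delta1 theta1 hdelta htheta) as (Hp & Hs & Hu & Hx).
set (p := delta1 * cos (theta1 / 2)) in *; set (s := delta1 * sin (theta1 / 2)) in *.
change (Cpolar delta1 (theta1 / 2)) with (mkC p s).
transitivity (Im (mu_ratio h rho (mkC p s)) = 0 /\ 0 < Re (mu_ratio h rho (mkC p s))
              /\ phase rho (mkC p s) = 0).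
{ exact (phase_family_trivial (mu_ratio h rho (mkC p s)) (phase rho (mkC p s))). }
rewrite (mu_ratio_conditions h rho p s hh hrho Hp Hs).
rewrite admissible_parameters by nra.
rewrite Hu, Hx.
apply polar_parameters; assumption.
Qed.
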